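(* Let $M$ be an $n$-dimensional manifold (or open subset of $\mathbb{R}^n$) with coordinates $x^1,\dots,x^n$, and let $\eta^{ij}=\eta_{ij}$ be a constant diagonal matrix with diagonal entries $\eta^{ii}=\eta_{ii}\in\{1,-1\}$. Let $\mathcal{K}$ be the Clifford algebra of differential forms (over the ring of scalar functions on $M$) generated by $dx^1,\dots,dx^n$ subject to $dx^i dx^j+dx^j dx^i=2\eta^{ij}$, and let $\mathcal{C}$ be the real Clifford algebra generated by vectors $\mathbf{a}_1,\dots,\mathbf{a}_n$ subject to $\mathbf{a}_i\mathbf{a}_j+\mathbf{a}_j\mathbf{a}_i=2\eta_{ij}$. On the tensor product $\mathcal{K}\otimes\mathcal{C}$ (with scalar-function coefficients), define the product $(\vee,\vee)$ by $(f\,u\,A)(\vee,\vee)(g\,v\,B)=fg\,(uv)(AB)$ for scalar functions $f,g$, $u,v\in\mathcal{K}$, $A,B\in\mathcal{C}$, extended bilinearly, where $uv$ and $AB$ are the respective Clifford products. For an increasing multi-index $I=(i_1<\dots<i_p)$ (including the empty one) write $dx^I=dx^{i_1}\cdots dx^{i_p}$ and $\mathbf{a}_I=\mathbf{a}_{i_1}\cdots\mathbf{a}_{i_p}$. Call an element mirror symmetric if it is of the form $\sum_I f_I\, dx^I\mathbf{a}_I$ with scalar functions $f_I$. Then the set of mirror symmetric elements is closed under $(\vee,\vee)$ and, with this product, forms a commutative algebra: for all mirror symmetric $U,V$, $U(\vee,\vee)V=V(\vee,\vee)U$ and this product is mirror symmetric.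
   Context: Elements such as $dx^1\mathbf{a}_1$ or $dx^1dx^2\mathbf{a}_1\mathbf{a}_2$ are mirror symmetric (the index set of the differential-form factor equals that of the tangent Clifford factor), while e.g. $dx^1\mathbf{a}_2$ is not. The product $(\vee,\vee)$ uses the Clifford product in both tensor factors simultaneously. *)

From HB Require Import structures.
From mathcomp Require Import all_boot all_order all_algebra.
Set Implicit Arguments. Unset Strict Implicit. Unset Printing Implicit Defensive.
Import Order.TTheory GRing.Theory Num.Theory.
Local Open Scope ring_scope.

(* Increasing multi-indices I = (i_1 < ... < i_p) are encoded as subsets of 'I_n. *)
Definition setSD (n : nat) (A B : {set 'I_n}) : {set 'I_n} := (A :\: B) :|: (B :\: A).

(* Clifford product of basis blades for a diagonal metric eta:
   e_I e_J = (-1)^{#{(i,j) : i in I, j in J, j < i}} * (prod_{k in I /\ J} eta_k) * e_{I \triangle J}. *)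
Definition cliff_sign (R : comRingType) (n : nat) (eta : 'I_n -> R)
  (I J : {set 'I_n}) : R :=
  (-1) ^+ #|[set p : 'I_n * 'I_n | (p.1 \in I) && (p.2 \in J) && ((p.2 < p.1)%N) ]|
  * \prod_(k in I :&: J) eta k.

(* Elements of K (x) C with scalar coefficients in R: coefficient of dx^I a_J
   stored at (I, J). *)
Definition KC (R : comRingType) (n : nat) := {ffun {set 'I_n} * {set 'I_n} -> R}.

Definition vvprod (R : comRingType) (n : nat) (eta : 'I_n -> R)
  (U V : KC R n) : KC R n :=
  [ffun KL : {set 'I_n} * {set 'I_n} =>
     \sum_(p : {set 'I_n} * {set 'I_n}) \sum_(q : {set 'I_n} * {set 'I_n})
       if (setSD p.1 q.1 == KL.1) && (setSD p.2 q.2 == KL.2) then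
         U p * V q * cliff_sign eta p.1 q.1 * cliff_sign eta p.2 q.2
       else 0].

Definition mirror_symmetric (R : comRingType) (n : nat) (U : KC R n) : Prop :=
  forall I J : {set 'I_n}, I != J -> U (I, J) = 0.

From Pilot Require Import Defs.
From mathcomp Require Import all_boot all_order all_algebra.
Import GRing.Theory.
Local Open Scope ring_scope.

(* On mirror symmetric elements only the terms (dx^I a_I)(v,v)(dx^J a_J) survive;
   swapping the factors multiplies dx^I dx^J and a_I a_J by the same sign, so
   the sign appears squared and cancels.  The product of such terms lives on
   dx^(I \triangle J) a_(I \triangle J), hence is again mirror symmetric.
   The argument works for an arbitrary diagonal metric, not only eta = +-1. *)

Lemma setSDC {n : nat} (A B : {set 'I_n}) : Defs.setSD A B = Defs.setSD B A.
Proof. by rewrite /Defs.setSD finset.setUC. Qed.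

Section MirrorSymmetric.

Variables (R : comRingType) (n : nat) (eta : 'I_n -> R).

Lemma cliff_sign_sqr (I J : {set 'I_n}) :
  cliff_sign eta I J ^+ 2 = (\prod_(k in I :&: J) eta k) ^+ 2.
Proof. by rewrite /cliff_sign exprMn -exprM mulnC exprM sqrrN expr1n expr1n mul1r. Qed.

Lemma cliff_signC_sqr (I J : {set 'I_n}) :
  cliff_sign eta I J ^+ 2 = cliff_sign eta J I ^+ 2.
Proof. by rewrite !cliff_sign_sqr setIC. Qed.

Lemma vvprodC_mirror (U V : KC R n) :
  mirror_symmetric U -> mirror_symmetric V -> vvprod eta U V = vvprod eta V U.
Proof.
move=> hU hV; apply/ffunP => KL; rewrite !ffunE exchange_big /=.
apply: eq_bigr => -[p1 p2] _; apply: eq_bigr => -[q1 q2] _ /=.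
rewrite (setSDC q1) (setSDC q2); case: ifP => // _.
have [<-|ne_q] := eqVneq q1 q2; last by rewrite (hU _ _ ne_q) !(mul0r, mulr0).
have [<-|ne_p] := eqVneq p1 p2; last by rewrite (hV _ _ ne_p) !(mul0r, mulr0).
by rewrite (mulrC (V _)) -[LHS]mulrA -[RHS]mulrA -!expr2 cliff_signC_sqr.
Qed.

Lemma mirror_symmetric_vvprod (U V : KC R n) :
  mirror_symmetric U -> mirror_symmetric V -> mirror_symmetric (vvprod eta U V).
Proof.
move=> hU hV K L neKL; rewrite ffunE /=.
apply: big1 => -[p1 p2] _; apply: big1 => -[q1 q2] _ /=.
case: ifP => // /andP[/eqP defK /eqP defL].
have [e_p|ne_p] := eqVneq p1 p2; last by rewrite (hU _ _ ne_p) !mul0r.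
have [e_q|ne_q] := eqVneq q1 q2; last by rewrite (hV _ _ ne_q) mulr0 !mul0r.
by rewrite -defK -defL e_p e_q eqxx in neKL.
Qed.

End MirrorSymmetric.

Theorem mainTheorem1 (R : comRingType) (n : nat) (eta : 'I_n -> R)
  (heta : forall i, eta i = 1 \/ eta i = -1)
  (U V : KC R n) :
  mirror_symmetric U -> mirror_symmetric V ->
  vvprod eta U V = vvprod eta V U /\ mirror_symmetric (vvprod eta U V).
Proof.
move=> hU hV; split; first exact: vvprodC_mirror.
exact: mirror_symmetric_vvprod.
Qed.
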